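(* Let $p\in\mathcal H(n,d)$ and suppose $p$ is affine in $x_n$, i.e. $p(x',x_n)=a(x')+x_n b(x')$ for some polynomials $a,b$ in $x'=(x_1,\dots,x_{n-1})$. Then $p\in\mathcal W$.
   Context: Write $s(x)=\sum_{j=1}^n x_j$. $\mathcal H(n,d)$ is the set of real polynomials in $x_1,\dots,x_n$ of total degree exactly $d$, with all coefficients nonnegative, such that $p(x)=1$ whenever $s(x)=1$. $\mathcal W$ is the set of polynomials obtainable from the constant polynomial $1$ by finitely many applications of operations of the form $g\mapsto g-u+s\,u$, where at each step $u$ is a polynomial such that both $u$ and $g-u$ have nonnegative coefficients. *)

From HB Require Import structures.
From mathcomp Require Import all_boot all_order all_algebra.
From mathcomp Require Import reals.
From mathcomp Require Import mpoly.
Set Implicit Arguments. Unset Strict Implicit. Unset Printing Implicit Defensive.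
Import Order.TTheory GRing.Theory Num.Theory.
Local Open Scope ring_scope.

Definition nonneg_coeffs (R : realType) (n : nat) (p : {mpoly R[n]}) : Prop :=
  forall m : 'X_{1..n}, 0 <= p@_m.

Definition spoly (R : realType) (n : nat) : {mpoly R[n]} := \sum_(i < n) 'X_i.

(* H(n,d): total degree exactly d, nonnegative coefficients,
   p(x) = 1 whenever s(x) = 1 (x real). *)
Definition inH (R : realType) (n d : nat) (p : {mpoly R[n]}) : Prop :=
  [/\ msize p = d.+1, nonneg_coeffs p &
      forall x : 'I_n -> R, \sum_(i < n) x i = 1 -> p.@[x] = 1].

Inductive inW (R : realType) (n : nat) : {mpoly R[n]} -> Prop :=
| inW_one : inW 1
| inW_step (g u : {mpoly R[n]}) :
    inW g -> nonneg_coeffs u -> nonneg_coeffs (g - u) ->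
    inW (g - u + spoly R n * u).

(* By hypothesis p = a + x_n b is 1 on the hyperplane s = 1; substituting
   x_n = 1 - s(x') gives the polynomial identity a = 1 - b + s' b, hence
   p = 1 + (s - 1) B with B = b read in n + 1 variables.  The coefficients of B
   are coefficients of p, so B >= 0.  Writing T_j for the part of B of degree
   < j, the polynomials 1 + (s - 1) T_j climb from 1 to p through W: the step
   j -> j + 1 uses u = T_(j+1) - T_j >= 0, and g - u = 1 - T_(j+1) + s T_j
   agrees with p in degrees <= j and with 1 + s T_j >= 0 above. *)

From HB Require Import structures.
From mathcomp Require Import all_boot all_order all_algebra.
From mathcomp Require Import reals.
From mathcomp Require Import mpoly.
From mathcomp Require Import ring.
Import Order.TTheory GRing.Theory Num.Theory.
Local Open Scope ring_scope.
Set Implicit Arguments. Unset Strict Implicit. Unset Printing Implicit Defensive.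

Local Notation widen := (widen_ord (leqnSn _)).

Section MultinomLast.
Variable n : nat.

Definition mnm_init (m : 'X_{1..n.+1}) : 'X_{1..n} := [multinom m (widen i) | i < n].

Lemma lift_ord_max (j : 'I_n) : lift ord_max j = widen j.
Proof. by apply: val_inj; rewrite /= /bump leqNgt ltn_ord. Qed.

Lemma eqmnm_last_init (m1 m2 : 'X_{1..n.+1}) :
  (m1 == m2) = (m1 ord_max == m2 ord_max) && (mnm_init m1 == mnm_init m2).
Proof.
apply/eqP/andP => [-> //|[/eqP e_last /eqP e_init]].
apply/mnmP => i; case: (unliftP ord_max i) => [j ->|-> //].
have := congr1 (fun m : 'X_{1..n} => m j) e_init.
by rewrite /mnm_init !mnmE lift_ord_max.
Qed.

End MultinomLast.

Section MPolyCoeff.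
Variables (R : nzRingType) (n : nat).
Implicit Types (p : {mpoly R[n]}) (m : 'X_{1..n}).

Lemma mcoeff_sum_msupp (P : pred 'X_{1..n}) p m :
  (\sum_(m0 <- msupp p | P m0) p@_m0 *: 'X_[m0])@_m = if P m then p@_m else 0.
Proof.
rewrite raddf_sum /= (eq_bigr (fun m0 => p@_m0 * (m0 == m)%:R)); last first.
  by move=> m0 _; rewrite mcoeffZ mcoeffX.
case: ifP => [Pm|nPm]; last first.
  by apply: big1 => m0 Pm0; case: eqP Pm0 => [->|_]; rewrite ?nPm ?mulr0.
have [m_p|/memN_msupp_eq0 pm0] := boolP (m \in msupp p).
  rewrite big_mkcond (bigD1_seq m) ?msupp_uniq //= Pm eqxx mulr1 big1 ?addr0 //.
  by move=> m0 /negbTE ->; rewrite mulr0 if_same.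
by rewrite pm0; apply: big1 => m0 _; case: eqP => [->|_]; rewrite ?pm0 ?mul0r ?mulr0.
Qed.

Lemma mcoeffM_eq0_low (P D : {mpoly R[n]}) m :
  P@_0 = 0 -> (forall k, (mdeg k < mdeg m)%N -> D@_k = 0) -> (P * D)@_m = 0.
Proof.
move=> P0 D_low; rewrite mcoeffM; apply: big1 => k /eqP m_eq.
have [->|k1_neq0] := eqVneq (bmnm k.1) 0%MM; first by rewrite P0 mul0r.
have deg_m : mdeg m = (mdeg k.1 + mdeg k.2)%N by have := congr1 mdeg m_eq; rewrite mdegD.
rewrite D_low ?mulr0 //; apply: (@leq_trans (mdeg k.1 + mdeg k.2)); last by rewrite -deg_m.
by rewrite -{1}[mdeg k.2]add0n ltn_add2r lt0n mdeg_eq0.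
Qed.

End MPolyCoeff.

Section MPolyUni.
Variables (R : nzRingType) (n : nat).
Implicit Types (q : {mpoly R[n.+1]}).

Lemma mcoeff_muni q m : ((muni q)`_(m ord_max))@_(mnm_init m) = q@_m.
Proof.
transitivity ((\sum_(m0 <- msupp q | m0 ord_max == m ord_max) q@_m0 *: 'X_[m0])@_m).
  rewrite muniE coef_sumMXn !raddf_sum; apply: eq_bigr => m0 /= e_last.
  by rewrite !mcoeffZ !mcoeffX (eqmnm_last_init m0) e_last.
by rewrite mcoeff_sum_msupp eqxx.
Qed.

Lemma muni_inj : injective (@muni n R).
Proof.
move=> q1 q2 e; apply/mpolyP => m.
by rewrite -!mcoeff_muni e.
Qed.

End MPolyUni.

Lemma mcoeff_mwiden_eq0 (R : nzRingType) n (a : {mpoly R[n]}) (m : 'X_{1..n.+1}) :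
  m ord_max != 0%N -> (mwiden a)@_m = 0.
Proof.
move=> m_last; rewrite (mpolyE a) (raddf_sum (@mwiden n R)) raddf_sum /=.
apply: big1 => m0 _; rewrite mwidenZ mcoeffZ mwidenX mcoeffX.
case: eqP => [m_def|_]; last by rewrite mulr0.
by rewrite -m_def mnmwiden_ordmax eqxx in m_last.
Qed.

Definition rcons_fun (T : Type) n (y : 'I_n -> T) (t : T) : 'I_n.+1 -> T :=
  fun i => if unlift ord_max i is Some j then y j else t.

Section RconsFun.
Variables (R : comNzRingType) (n : nat) (y : 'I_n -> R) (t : R).

Lemma rcons_fun_widen (i : 'I_n) : rcons_fun y t (widen i) = y i.
Proof. by rewrite /rcons_fun -lift_ord_max liftK. Qed.

Lemma rcons_fun_max : rcons_fun y t ord_max = t.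
Proof. by rewrite /rcons_fun unlift_none. Qed.

Lemma sum_rcons_fun : \sum_i rcons_fun y t i = \sum_i y i + t.
Proof.
by rewrite big_ord_recr rcons_fun_max; under eq_bigr do rewrite rcons_fun_widen.
Qed.

Lemma meval_muni (q : {mpoly R[n.+1]}) :
  q.@[rcons_fun y t] = (map_poly (meval y) (muni q)).[t].
Proof.
rewrite muniE rmorph_sum horner_sum mevalE; apply: eq_bigr => m _.
rewrite /= map_polyZ map_polyXn hornerZ hornerXn /= mevalZ mevalX big_ord_recr /=.
rewrite rcons_fun_max mulrA; congr (_ * _ * _); apply: eq_bigr => i _.
by rewrite mnmE rcons_fun_widen.
Qed.

Lemma meval_mwiden (a : {mpoly R[n]}) : (mwiden a).@[rcons_fun y t] = a.@[y].
Proof.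
rewrite {1}(mpolyE a) (raddf_sum (@mwiden n R)) raddf_sum /= mevalE; apply: eq_bigr => m _.
rewrite mwidenZ mevalZ mwidenX mevalX big_ord_recr /= mnmwiden_ordmax expr0 mulr1.
by congr (_ * _); apply: eq_bigr => i _; rewrite mnmwiden_widen rcons_fun_widen.
Qed.

End RconsFun.

Lemma poly_eq0_horner (R : numDomainType) (P : {poly R}) :
  (forall t, P.[t] = 0) -> P = 0.
Proof.
move=> P0; apply: (@roots_geq_poly_eq0 _ _ [seq i%:R | i <- iota 0 (size P)]).
- by apply/allP => _ /mapP[i _ ->]; rewrite /root P0.
- by rewrite map_inj_uniq ?iota_uniq // => i j /eqP; rewrite eqr_nat => /eqP.
- by rewrite size_map size_iota.
Qed.

Lemma mpoly_eq0_meval (R : numDomainType) n (q : {mpoly R[n]}) :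
  (forall x, q.@[x] = 0) -> q = 0.
Proof.
elim: n q => [|n IHn] q q0.
  have q_const : q = (q@_0)%:MP.
    apply: msize1_polyC; rewrite msizeE; apply/bigmax_leqP_seq => m _ _.
    by rewrite mdegE big_ord0.
  by move: (q0 (fun=> 0)); rewrite q_const mevalC => ->; rewrite mpolyC0.
apply: muni_inj; rewrite muni0; apply/polyP => k; rewrite coef0.
apply: IHn => y.
have uni0 : map_poly (meval y) (muni q) = 0.
  by apply: poly_eq0_horner => t; rewrite -meval_muni.
by rewrite -coef_map uni0 coef0.
Qed.

Section Truncation.
Variables (R : nzRingType) (n : nat).
Implicit Types (p : {mpoly R[n]}) (m : 'X_{1..n}).

Definition mtrunc (j : nat) p : {mpoly R[n]} :=
  \sum_(m <- msupp p | (mdeg m < j)%N) p@_m *: 'X_[m].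

Lemma mcoeff_mtrunc j p m : (mtrunc j p)@_m = if (mdeg m < j)%N then p@_m else 0.
Proof. exact: mcoeff_sum_msupp. Qed.

Lemma mtrunc0 p : mtrunc 0 p = 0.
Proof. by apply/mpolyP => m; rewrite mcoeff_mtrunc mcoeff0. Qed.

Lemma mtrunc_msize p : mtrunc (msize p) p = p.
Proof.
apply/mpolyP => m; rewrite mcoeff_mtrunc; case: ltnP => // /msize_mdeg_ge.
by move/memN_msupp_eq0.
Qed.

End Truncation.

Section RealCoeffs.
Variables (R : realType) (n : nat).
Implicit Types (p q : {mpoly R[n]}).

Lemma nonneg_coeffsM p q : nonneg_coeffs p -> nonneg_coeffs q -> nonneg_coeffs (p * q).
Proof. by move=> p_ge0 q_ge0 m; rewrite mcoeffM; apply: sumr_ge0 => k _; apply: mulr_ge0. Qed.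

Lemma nonneg_coeffs_mtrunc j p : nonneg_coeffs p -> nonneg_coeffs (mtrunc j p).
Proof. by move=> p_ge0 m; rewrite mcoeff_mtrunc; case: ifP. Qed.

Lemma nonneg_coeffs_spoly : nonneg_coeffs (spoly R n).
Proof. by move=> m; rewrite raddf_sum /=; apply: sumr_ge0 => i _; rewrite mcoeffX ler0n. Qed.

Lemma mcoeff0_spoly : (spoly R n)@_0 = 0.
Proof.
rewrite raddf_sum /= big1 // => i _; rewrite mcoeffX.
by case: eqP => // /(congr1 mdeg); rewrite mdeg1 mdeg0.
Qed.

Lemma spoly_widen : spoly R n.+1 = mwiden (spoly R n) + 'X_ord_max.
Proof.
rewrite /spoly big_ord_recr /= (raddf_sum (@mwiden n R)); congr (_ + _).
by apply: eq_bigr => i _; rewrite -mnmwiden1 -mwidenX.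
Qed.

Lemma meval_spoly (x : 'I_n -> R) : (spoly R n).@[x] = \sum_i x i.
Proof. by rewrite raddf_sum; apply: eq_bigr => i _; apply: mevalXU. Qed.

End RealCoeffs.

Section WeightGeneration.
Variables (R : realType) (n : nat) (B : {mpoly R[n]}).
Local Notation s := (spoly R n).
Hypotheses (B_ge0 : nonneg_coeffs B) (form_ge0 : nonneg_coeffs (1 + (s - 1) * B)).

Lemma nonneg_coeffs_mtruncS_sub j : nonneg_coeffs (mtrunc j.+1 B - mtrunc j B).
Proof.
move=> m; rewrite mcoeffB !mcoeff_mtrunc ltnS.
by case: ltngtP => _; rewrite ?subrr ?subr0.
Qed.

Lemma nonneg_coeffs_mtruncS_step j :
  nonneg_coeffs (1 - mtrunc j.+1 B + s * mtrunc j B).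
Proof.
move=> m; rewrite mcoeffD mcoeffB mcoeff_mtrunc ltnS.
case: leqP => deg_m; last first.
  rewrite subr0 addr_ge0 ?mcoeff1 ?ler0n //.
  by apply: nonneg_coeffsM; [apply: nonneg_coeffs_spoly | apply: nonneg_coeffs_mtrunc].
(* In degrees <= j, s * mtrunc j B agrees with s * B since s has no constant
   term, so the coefficient is that of 1 + (s - 1) * B. *)
have -> : (s * mtrunc j B)@_m = (s * B)@_m.
  apply/eqP; rewrite -subr_eq0 -mcoeffB -mulrBr; apply/eqP.
  apply: mcoeffM_eq0_low; first exact: mcoeff0_spoly.
  move=> k deg_k.
  by rewrite mcoeffB mcoeff_mtrunc (leq_trans deg_k deg_m) subrr.
have := form_ge0 m; rewrite mulrBl mul1r addrA.
by rewrite !mcoeffD mcoeffN addrAC.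
Qed.

Lemma inW_1_add_spoly_sub1_mul_mtrunc j : inW (1 + (s - 1) * mtrunc j B).
Proof.
elim: j => [|j IHj]; first by rewrite mtrunc0 mulr0 addr0; apply: inW_one.
set T := mtrunc j B; set T' := mtrunc j.+1 B.
have -> : 1 + (s - 1) * T' = (1 + (s - 1) * T) - (T' - T) + s * (T' - T) by ring.
apply: inW_step => //; first exact: nonneg_coeffs_mtruncS_sub.
have -> : 1 + (s - 1) * T - (T' - T) = 1 - T' + s * T by ring.
exact: nonneg_coeffs_mtruncS_step.
Qed.

Lemma inW_1_add_spoly_sub1_mul : inW (1 + (s - 1) * B).
Proof. by rewrite -(mtrunc_msize B); apply: inW_1_add_spoly_sub1_mul_mtrunc. Qed.

End WeightGeneration.

Section AffineInLastVariable.
Variables (R : realType) (n : nat) (a b : {mpoly R[n]}).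
Local Notation p := (mwiden a + 'X_ord_max * mwiden b).

Lemma nonneg_coeffs_mwiden_last : nonneg_coeffs p -> nonneg_coeffs (mwiden b).
Proof.
move=> p_ge0 m; have := p_ge0 (U_(ord_max) + m)%MM.
rewrite mcoeffD mcoeff_mwiden_eq0 ?add0r; last by rewrite mnmDE mnm1E eqxx.
by rewrite mulrC mcoeffMX.
Qed.

Lemma affine_eq1_on_hyperplaneE :
  (forall x : 'I_n.+1 -> R, \sum_i x i = 1 -> p.@[x] = 1) ->
  p = 1 + (spoly R n.+1 - 1) * mwiden b.
Proof.
move=> p_eq1.
suff -> : a = 1 - b + spoly R n * b.
  by rewrite spoly_widen !rmorphD rmorphN rmorphM rmorph1; ring.
apply/eqP; rewrite -subr_eq0; apply/eqP/mpoly_eq0_meval => y.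
have := p_eq1 (rcons_fun y (1 - \sum_i y i)).
rewrite sum_rcons_fun addrC subrK mevalD mevalM mevalXU rcons_fun_max !meval_mwiden.
move=> /(_ erefl) eval_eq1.
rewrite !(mevalB, mevalD, mevalM) meval1 meval_spoly -eval_eq1; ring.
Qed.

End AffineInLastVariable.

Unset Implicit Arguments.

Theorem lemma6 (R : realType) (n d : nat) (p : {mpoly R[n.+1]}) :
  inH d p ->
  (exists a b : {mpoly R[n]}, p = mwiden a + 'X_ord_max * mwiden b) ->
  inW p.
Proof.
move=> [_ p_ge0 p_eq1] [a [b p_def]]; subst p.
have b_ge0 := nonneg_coeffs_mwiden_last p_ge0.
rewrite affine_eq1_on_hyperplaneE // in p_ge0 *.
exact: inW_1_add_spoly_sub1_mul.
Qed.
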